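(* Let $F$ be a bicontinuous set functor with a presentation $\varepsilon\colon H_\Sigma\to F$, let $X\neq\emptyset$ be a set and choose $p'\in\Sigma_0\cup X$. Then the free completely iterative algebra $\Psi X$ on $X$, ordered by cutting, is a cpo which is a conservative completion of the free algebra $\Phi X$ on $X$ (embedded via $m_X$). Moreover, the algebra structure of $\Psi X$ is the unique continuous extension of that of $\Phi X$: ordering $F(\Phi X)+X$ so that $\varphi_X$ is an order isomorphism and $F(\Psi X)+X$ so that $\tau_X^{-1}$ is one, $\tau_X^{-1}$ is the unique continuous map $g\colon F(\Psi X)+X\to\Psi X$ with $g\cdot(Fm_X+\mathrm{id}_X)=m_X\cdot\varphi_X$.
   Context: Bicontinuous: preserves filtered colimits and limits of $\omega^{op}$-chains. $(\Phi X,\varphi_X\colon F(\Phi X)+X\to\Phi X)$ is the initial algebra of $F(-)+X$ (= free $F$-algebra on $X$); $(\Psi X,\tau_X\colon\Psi X\to F(\Psi X)+X)$ is the terminal coalgebra of $F(-)+X$, which is the free completely iterative $F$-algebra on $X$ (algebra structure = components of $\tau_X^{-1}$). $m_X\colon\Phi X\to\Psi X$ is the unique coalgebra homomorphism from $(\Phi X,\varphi_X^{-1})$ to $(\Psi X,\tau_X)$ (injective). Presentation: finitary signature $\Sigma$, $H_\Sigma Y=\coprod_n\Sigma_n\times Y^n$, natural $\varepsilon\colon H_\Sigma\to F$ with surjective components; then $\varepsilon+\mathrm{id}_X\colon H_\Sigma(-)+X\to F(-)+X$ is a presentation of $F(-)+X$ by the signature $\Sigma_X=\Sigma+X$ (elements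 of $X$ nullary). $\Sigma$-trees over $X$: ordered rooted trees labelled in $\Sigma+X$, a node labelled in $\Sigma_n$ having $n$ children, elements of $X$ only at leaves; $\Psi_\Sigma X$ = all of them (terminal coalgebra of $H_\Sigma(-)+X$, structure $\tau'_X$ = inverse of tree tupling), $\Phi_\Sigma X$ = finite ones. $\partial'_ns$: delete nodes of height $>n$ and relabel nodes of height $n$ by $p'$. $h_X\colon\Phi_\Sigma X\to\Phi X$: the unique homomorphism of algebras for $H_\Sigma(-)+X$ into $(\Phi X,\varphi_X\cdot(\varepsilon_{\Phi X}+\mathrm{id}))$; $\sim$ its kernel; $s\sim^*s'$ iff $\partial'_ns\sim\partial'_ns'$ for all $n$. $\hat k_X\colon\Psi_\Sigma X\to\Psi X$: the unique coalgebra homomorphism for $F(-)+X$ from $(\Psi_\Sigma X,(\varepsilon+\mathrm{id})\cdot\tau'_X)$; surjective with kernel $\sim^*$. Order by cutting on $\Psi X$: $x\le y$ iff $x=y$ or $x=\hat k_X(s)$, $y=\hat k_X(s')$ with $s\sim^*\partial'_ns'$ for some $n$. $\Phi X$ has the order induced via $m_X$. Continuous = monotone and preserving existing directed joins. A conservative completion of a poset $P$ is a cpo containing $P$ as a subposet closed under existing directed joins such that every continuous map from $P$ into a cpo extends uniquely to a continuous map on it. *)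

From mathcomp Require Import all_boot.
From Stdlib Require Import FunctionalExtensionality.
Set Implicit Arguments. Unset Strict Implicit. Unset Printing Implicit Defensive.

Record SetFunctor := {
  Fobj :> Type -> Type;
  fmap : forall (A B : Type), (A -> B) -> Fobj A -> Fobj B;
  fmap_id : forall (A : Type) (x : Fobj A), fmap (fun a : A => a) x = x;
  fmap_comp : forall (A B C : Type) (f : A -> B) (g : B -> C) (x : Fobj A),
      fmap (fun a => g (f a)) x = fmap g (fmap f x)
}.
Arguments fmap s {A B} f _.

Record SmallCat := {
  ob : Type;
  hom : ob -> ob -> Type;
  cid : forall a, hom a a;
  ccomp : forall a b c, hom b c -> hom a b -> hom a c;
  ccomp_id_l : forall a b (f : hom a b), ccomp (cid b) f = f;
  ccomp_id_r : forall a b (f : hom a b), ccomp f (cid a) = f;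
  ccomp_assoc : forall a b c d (f : hom a b) (g : hom b c) (h : hom c d),
      ccomp h (ccomp g f) = ccomp (ccomp h g) f
}.
Arguments cid {_} a.
Arguments ccomp {_ a b c} _ _.

Definition filtered (J : SmallCat) : Prop :=
  inhabited (ob J) /\
  (forall a b : ob J, exists c, exists (f : hom a c) (g : hom b c), True) /\
  (forall (a b : ob J) (f g : hom a b), exists c (h : hom b c), ccomp h f = ccomp h g).

Record Diagram (J : SmallCat) := {
  Dob :> ob J -> Type;
  Dmap : forall a b, hom a b -> Dob a -> Dob b;
  Dmap_id : forall a (x : Dob a), Dmap (cid a) x = x;
  Dmap_comp : forall a b c (f : hom a b) (g : hom b c) (x : Dob a),
      Dmap (ccomp g f) x = Dmap g (Dmap f x)
}.
Arguments Dmap {J} d {a b} f x.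

Definition is_cocone (J : SmallCat) (D : Diagram J) (C : Type)
  (c : forall a, D a -> C) : Prop :=
  forall a b (f : hom a b) (x : D a), c b (Dmap D f x) = c a x.

Definition is_colimit (J : SmallCat) (D : Diagram J) (C : Type)
  (c : forall a, D a -> C) : Prop :=
  is_cocone c /\
  forall (Z : Type) (z : forall a, D a -> Z), is_cocone z ->
    exists h : C -> Z, (forall a x, h (c a x) = z a x) /\
      forall h' : C -> Z, (forall a x, h' (c a x) = z a x) -> forall y, h' y = h y.

Definition FDiagram (F : SetFunctor) (J : SmallCat) (D : Diagram J) : Diagram J.
Proof.
refine {| Dob := fun a => F (D a);
          Dmap := fun a b f x => fmap F (Dmap D f) x |}.
- move=> a x; rewrite -[RHS](fmap_id x); congr (fmap F _ x).
  by apply: FunctionalExtensionality.functional_extensionality => y; rewrite Dmap_id.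
- move=> a b c f g x; rewrite -fmap_comp; congr (fmap F _ x).
  by apply: FunctionalExtensionality.functional_extensionality => y; rewrite Dmap_comp.
Defined.

Definition preserves_filtered_colimits (F : SetFunctor) : Prop :=
  forall (J : SmallCat) (D : Diagram J) (C : Type) (c : forall a, D a -> C),
    filtered J -> is_colimit c ->
    is_colimit (D := FDiagram F D) (fun a => fmap F (c a)).

Definition is_chain_cone (A : nat -> Type) (f : forall n, A n.+1 -> A n)
  (L : Type) (p : forall n, L -> A n) : Prop :=
  forall n l, f n (p n.+1 l) = p n l.

Definition is_chain_limit (A : nat -> Type) (f : forall n, A n.+1 -> A n)
  (L : Type) (p : forall n, L -> A n) : Prop :=
  is_chain_cone f p /\
  forall (Z : Type) (z : forall n, Z -> A n), is_chain_cone f z ->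
    exists h : Z -> L, (forall n y, p n (h y) = z n y) /\
      forall h' : Z -> L, (forall n y, p n (h' y) = z n y) -> forall y, h' y = h y.

Definition preserves_omegaop_limits (F : SetFunctor) : Prop :=
  forall (A : nat -> Type) (f : forall n, A n.+1 -> A n)
         (L : Type) (p : forall n, L -> A n),
    is_chain_limit f p ->
    is_chain_limit (A := fun n => F (A n)) (fun n => fmap F (f n))
                   (fun n => fmap F (p n)).

Definition bicontinuous (F : SetFunctor) : Prop :=
  preserves_filtered_colimits F /\ preserves_omegaop_limits F.

Definition Gmap (F : SetFunctor) (X : Type) (A B : Type) (f : A -> B)
  (z : F A + X) : F B + X :=
  match z with inl a => inl (fmap F f a) | inr x => inr x end.
Arguments Gmap F {X A B} f z.

Definition is_initial_algebra (F : SetFunctor) (X : Type) (A : Type)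
  (a : F A + X -> A) : Prop :=
  forall (B : Type) (b : F B + X -> B),
    exists h : A -> B, (forall z, h (a z) = b (Gmap F h z)) /\
      forall h' : A -> B, (forall z, h' (a z) = b (Gmap F h' z)) -> forall y, h' y = h y.

Definition is_terminal_coalgebra (F : SetFunctor) (X : Type) (A : Type)
  (a : A -> F A + X) : Prop :=
  forall (B : Type) (b : B -> F B + X),
    exists h : B -> A, (forall y, a (h y) = Gmap F h (b y)) /\
      forall h' : B -> A, (forall y, a (h' y) = Gmap F h' (b y)) -> forall y, h' y = h y.

(* Sigma n = the set of n-ary operation symbols *)
Definition HS (Sigma : nat -> Type) (Y : Type) : Type :=
  {n : nat & (Sigma n * ('I_n -> Y))%type}.

Definition HSmap (Sigma : nat -> Type) (A B : Type) (f : A -> B)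
  (h : HS Sigma A) : HS Sigma B :=
  match h with existT n (s, ys) => existT _ n (s, fun i => f (ys i)) end.

Definition is_presentation (F : SetFunctor) (Sigma : nat -> Type)
  (eps : forall Y : Type, HS Sigma Y -> F Y) : Prop :=
  (forall (A B : Type) (f : A -> B) (h : HS Sigma A),
      eps B (HSmap f h) = fmap F f (eps A h)) /\
  (forall (Y : Type) (y : F Y), exists h, eps Y h = y).

CoInductive tree (Sigma : nat -> Type) (X : Type) : Type :=
| Leaf (x : X)
| Node (n : nat) (s : Sigma n) (ch : 'I_n -> tree Sigma X).

Inductive ftree (Sigma : nat -> Type) (X : Type) : Type :=
| FLeaf (x : X)
| FNode (n : nat) (s : Sigma n) (ch : 'I_n -> ftree Sigma X).

Arguments Leaf {Sigma X} x.
Arguments Node {Sigma X n} s ch.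
Arguments FLeaf {Sigma X} x.
Arguments FNode {Sigma X n} s ch.

Fixpoint embed (Sigma : nat -> Type) (X : Type) (t : ftree Sigma X) : tree Sigma X :=
  match t with
  | FLeaf x => Leaf x
  | FNode n s ch => Node s (fun i => embed (ch i))
  end.

Definition ord0_elim (T : Type) (i : 'I_0) : T.
Proof. by case: i. Defined.

Definition pleaf (Sigma : nat -> Type) (X : Type) (p' : Sigma 0 + X) : ftree Sigma X :=
  match p' with
  | inl s => FNode s (@ord0_elim _)
  | inr x => FLeaf x
  end.

Fixpoint cut (Sigma : nat -> Type) (X : Type) (p' : Sigma 0 + X) (n : nat)
  (t : tree Sigma X) : ftree Sigma X :=
  match n with
  | 0 => pleaf p'
  | k.+1 => match t with
            | Leaf x => FLeaf x
            | Node _ s ch => FNode s (fun i => cut p' k (ch i))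
            end
  end.

Definition tree_destr (Sigma : nat -> Type) (X : Type) (t : tree Sigma X)
  : HS Sigma (tree Sigma X) + X :=
  match t with
  | Leaf x => inr x
  | Node n s ch => inl (existT _ n (s, ch))
  end.

Definition tree_coalg (F : SetFunctor) (Sigma : nat -> Type)
  (eps : forall Y : Type, HS Sigma Y -> F Y) (X : Type) (t : tree Sigma X)
  : F (tree Sigma X) + X :=
  match tree_destr t with
  | inl h => inl (eps _ h)
  | inr x => inr x
  end.

(* h_X : Phi_Sigma X -> Phi X, the unique homomorphism of H_Sigma(-)+X algebras
   into (Phi X, phi_X . (eps_{Phi X} + id)) *)
Fixpoint hX (F : SetFunctor) (Sigma : nat -> Type)
  (eps : forall Y : Type, HS Sigma Y -> F Y) (X : Type) (PhiX : Type)
  (phi : F PhiX + X -> PhiX) (t : ftree Sigma X) : PhiX :=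
  match t with
  | FLeaf x => phi (inr x)
  | FNode n s ch => phi (inl (eps PhiX (existT _ n (s, fun i => hX eps phi (ch i)))))
  end.

Definition sim_star (F : SetFunctor) (Sigma : nat -> Type)
  (eps : forall Y : Type, HS Sigma Y -> F Y) (X : Type) (PhiX : Type)
  (phi : F PhiX + X -> PhiX) (p' : Sigma 0 + X) (s s' : tree Sigma X) : Prop :=
  forall n, hX eps phi (cut p' n s) = hX eps phi (cut p' n s').

Definition cut_le (F : SetFunctor) (Sigma : nat -> Type)
  (eps : forall Y : Type, HS Sigma Y -> F Y) (X : Type) (PhiX : Type)
  (phi : F PhiX + X -> PhiX) (p' : Sigma 0 + X) (PsiX : Type)
  (khat : tree Sigma X -> PsiX) (x y : PsiX) : Prop :=
  x = y \/
  exists (s s' : tree Sigma X) (n : nat),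
    x = khat s /\ y = khat s' /\ sim_star eps phi p' s (embed (cut p' n s')).

Definition is_poset (T : Type) (le : T -> T -> Prop) : Prop :=
  (forall x, le x x) /\
  (forall x y z, le x y -> le y z -> le x z) /\
  (forall x y, le x y -> le y x -> x = y).

Definition directed (T : Type) (le : T -> T -> Prop) (D : T -> Prop) : Prop :=
  (exists x, D x) /\
  (forall x y, D x -> D y -> exists z, D z /\ le x z /\ le y z).

Definition is_join (T : Type) (le : T -> T -> Prop) (D : T -> Prop) (j : T) : Prop :=
  (forall x, D x -> le x j) /\
  (forall u, (forall x, D x -> le x u) -> le j u).

Definition is_cpo (T : Type) (le : T -> T -> Prop) : Prop :=
  is_poset le /\ forall D, directed le D -> exists j, is_join le D j.

Definition img (A B : Type) (f : A -> B) (D : A -> Prop) : B -> Prop :=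
  fun y => exists x, D x /\ y = f x.

Definition continuous (A B : Type) (leA : A -> A -> Prop) (leB : B -> B -> Prop)
  (f : A -> B) : Prop :=
  (forall x y, leA x y -> leB (f x) (f y)) /\
  (forall D j, directed leA D -> is_join leA D j -> is_join leB (img f D) (f j)).

Definition conservative_completion (P C : Type) (leP : P -> P -> Prop)
  (leC : C -> C -> Prop) (e : P -> C) : Prop :=
  is_cpo leC /\
  injective e /\ (forall a b, leP a b <-> leC (e a) (e b)) /\
  (forall D j, directed leP D -> is_join leP D j -> is_join leC (img e D) (e j)) /\
  (forall (Q : Type) (leQ : Q -> Q -> Prop), is_cpo leQ ->
     forall f : P -> Q, continuous leP leQ f ->
       exists g : C -> Q, continuous leC leQ g /\ (forall a, g (e a) = f a) /\
         forall g' : C -> Q, continuous leC leQ g' -> (forall a, g' (e a) = f a) ->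
           forall c, g' c = g c).

From mathcomp Require Import all_boot.
From Stdlib Require Import FunctionalExtensionality PropExtensionality ProofIrrelevance.
From Stdlib Require Import ClassicalEpsilon Classical.
Unset Printing Implicit Defensive.

(* Let [trunc n y] be the [n]-th truncation of [y] in [PsiX]: unfold [y] [n]
   times along [tau] and fold back with [phi], putting the value [base_point]
   of [p'] at height [n].  The proof rests on three facts.
   1. [trunc k (m (trunc n y)) = trunc (min k n) y], and every element of [PhiX]
      is fixed by some [trunc n . m] (initiality plus finitary arities, through
      the presentation); in particular [m] is injective.
   2. As [F(-) + X] preserves limits of omega^op-chains, [PsiX] is the limit of
      the chain of truncations: elements are separated by their truncations and
      every coherent family of truncations is realised.
   3. Via trees, [trunc k (khat s)] is [h_X] of the [k]-th cut of [s]; hence the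
      order by cutting is [below]: [x] is [y] or [m (trunc n y)] for some [n].
   The order theory of [below] follows: directed joins exist and are
   approximated by truncations, every element is the join of its cuts, [m]
   preserves joins, and a continuous map on [PhiX] extends (uniquely) by taking
   joins over truncations.  The statement about [tau_inv] follows by
   transporting continuity along the order isomorphism [tau]. *)

Lemma sig_eq (A : Type) (P : A -> Prop) (u v : {a : A | P a}) :
  proj1_sig u = proj1_sig v -> u = v.
Proof. by apply: eq_sig_hprop => x p q; apply: proof_irrelevance. Qed.

Lemma join_ext {T : Type} {le : T -> T -> Prop} {A B : T -> Prop} {j : T} :
  (forall q, A q <-> B q) -> is_join le A j -> is_join le B j.
Proof.
move=> AB [ub least]; split; first by move=> x /AB; apply: ub.
by move=> u Hu; apply: least => x /AB; apply: Hu.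
Qed.

Lemma join_uniq {T : Type} {le : T -> T -> Prop} {D : T -> Prop} {a b : T} :
  is_poset le -> is_join le D a -> is_join le D b -> a = b.
Proof.
move=> [_ [_ anti]] [a_ub a_least] [b_ub b_least].
by apply: anti; [apply: a_least b_ub | apply: b_least a_ub].
Qed.

Lemma continuous_id {T : Type} (le : T -> T -> Prop) : continuous le le (fun x => x).
Proof.
split=> // D j _ Dj; apply: join_ext Dj => q.
by split=> [Dq | [x [Dx ->]]] //; exists q.
Qed.

Section OrderIsomorphism.
Context {A B C : Type} {leA : A -> A -> Prop} {leC : C -> C -> Prop}.
Context {u : A -> B} {v : B -> A}.
Hypothesis vK : forall a, v (u a) = a.

Let leB (b b' : B) : Prop := leA (v b) (v b').

Lemma continuous_pullback_inverse : continuous leB leA v.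
Proof.
split=> [x y // | D j _ [ub least]].
split; first by move=> _ [d [Dd ->]]; apply: ub.
move=> a Ha; rewrite -(vK a); apply: least => d Dd.
by rewrite /leB vK; apply: Ha; exists d.
Qed.

Lemma continuous_precomp_iso (g : B -> C) :
  continuous leB leC g -> continuous leA leC (fun a => g (u a)).
Proof.
move=> [g_mono g_join]; split.
  by move=> x y lxy; apply: g_mono; rewrite /leB !vK.
move=> D j [[x0 Dx0] Ddir] [ub least].
have dirU : directed leB (img u D).
  split; first by exists (u x0), x0.
  move=> _ _ [x [Dx ->]] [y [Dy ->]]; have [w [Dw [xw yw]]] := Ddir x y Dx Dy.
  by exists (u w); rewrite /leB !vK; split; [exists w|].
have joinU : is_join leB (img u D) (u j).
  split; first by move=> _ [x [Dx ->]]; rewrite /leB !vK; apply: ub.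
  move=> b Hb; rewrite /leB vK; apply: least => x Dx.
  by rewrite -(vK x); apply: Hb; exists x.
apply: join_ext (g_join _ _ dirU joinU) => q; split.
  by move=> [_ [[x [Dx ->]] ->]]; exists x.
by move=> [x [Dx ->]]; exists (u x); split=> //; exists x.
Qed.

End OrderIsomorphism.

Section SumFunctor.
Context {F : SetFunctor} {X : Type}.

Lemma Gmap_id {A : Type} (z : F A + X) : Gmap F (fun a => a) z = z.
Proof. by case: z => [a|x] //=; rewrite fmap_id. Qed.

Lemma Gmap_comp {A B C : Type} (f : A -> B) (g : B -> C) (z : F A + X) :
  Gmap F g (Gmap F f z) = Gmap F (fun a => g (f a)) z.
Proof. by case: z => [a|x] //=; rewrite -fmap_comp. Qed.

Lemma Gmap_ext {A B : Type} {f g : A -> B} (z : F A + X) :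
  (forall a, f a = g a) -> Gmap F f z = Gmap F g z.
Proof. by move=> fg; rewrite (functional_extensionality _ _ fg). Qed.

Lemma initial_algebra_ind {A : Type} {alpha : F A + X -> A} (P : A -> Prop) :
  is_initial_algebra alpha ->
  (forall z : F {a | P a} + X, P (alpha (Gmap F (@proj1_sig _ _) z))) ->
  forall a, P a.
Proof.
move=> Halpha closed a.
have [h [Hh _]] := Halpha _ (fun z => exist _ _ (closed z)).
have [h0 [_ Uh0]] := Halpha _ alpha.
have Eh : forall a, proj1_sig (h a) = h0 a.
  by move=> b; apply: (Uh0 (fun b => proj1_sig (h b))) => z; rewrite Hh /= Gmap_comp.
have Eid : forall a, a = h0 a by move=> b; apply: (Uh0 (fun b => b)) => z; rewrite Gmap_id.
by move: (proj2_sig (h a)); rewrite Eh -Eid.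
Qed.

Lemma terminal_coalgebra_endo {A : Type} {alpha : A -> F A + X} (h : A -> A) :
  is_terminal_coalgebra alpha -> (forall y, alpha (h y) = Gmap F h (alpha y)) ->
  forall y, h y = y.
Proof.
move=> Halpha Hh y; have [h0 [_ Uh0]] := Halpha _ alpha.
by rewrite (Uh0 h Hh); symmetry; apply: (Uh0 (fun b => b)) => b; rewrite Gmap_id.
Qed.

End SumFunctor.

(* If [F] preserves the limit [L] of an omega^op-chain [B], so does [F(-) + X]:
   along a cone into the chain [F (B n) + X] an element either stays in [X],
   constantly, or stays in the [F]-summand, where the limit of [F] applies. *)
Section SumChainLimit.
Context {F : SetFunctor} {X : Type} {B : nat -> Type} {f : forall n, B n.+1 -> B n}.
Context {L : Type} {p : forall n, L -> B n}.
Hypothesis HL : is_chain_limit (A := fun n => F (B n)) (fun n => fmap F (f n))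
                               (fun n => fmap F (p n)).
Context {Z : Type} {z : forall n, Z -> F (B n) + X}.
Hypothesis Hz : is_chain_cone (A := fun n => (F (B n) + X)%type) (fun n => Gmap F (f n)) z.

Lemma sum_cone_inr y x n : z 0 y = inr x -> z n y = inr x.
Proof.
move=> E; elim: n => [//|n IH]; case E': (z n.+1 y) => [c|x'].
  by move: (Hz n y); rewrite E' IH.
by move: (Hz n y); rewrite E' IH => /= -[->].
Qed.

Lemma sum_cone_inl y c n : z 0 y = inl c -> exists c', z n y = inl c'.
Proof.
move=> E; case E': (z n y) => [c'|x]; first by exists c'.
suff: z 0 y = inr x by rewrite E.
by elim: n E' => [//|n IH] E'; apply: IH; rewrite -(Hz n y) E'.
Qed.

Definition inl_part := {y : Z | forall n, exists c, z n y = inl c}.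

Definition inl_comp n (y : inl_part) : F (B n) :=
  proj1_sig (constructive_indefinite_description _ (proj2_sig y n)).

Lemma inl_compE n y : z n (proj1_sig y) = inl (inl_comp n y).
Proof. by rewrite /inl_comp; case: (constructive_indefinite_description _ _). Qed.

Lemma inl_comp_cone :
  is_chain_cone (A := fun n => F (B n)) (fun n => fmap F (f n)) inl_comp.
Proof. by move=> n y; have := Hz n (proj1_sig y); rewrite !inl_compE => -[]. Qed.

Lemma sum_cone_mediator : exists h : Z -> F L + X,
  (forall n y, Gmap F (p n) (h y) = z n y) /\
  forall h' : Z -> F L + X, (forall n y, Gmap F (p n) (h' y) = z n y) -> forall y, h' y = h y.
Proof.
have [hM [HhM UhM]] := proj2 HL _ _ inl_comp_cone.
pose h0 (y : Z) (e : F (B 0) + X) (E : z 0 y = e) : F L + X :=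
  match e as e0 return z 0 y = e0 -> F L + X with
  | inl c => fun E => inl (hM (exist _ y (fun n => sum_cone_inl y c n E)))
  | inr x => fun _ => inr x end E.
exists (fun y => h0 y (z 0 y) erefl); split.
  move=> n y; suff: forall e E, Gmap F (p n) (h0 y e E) = z n y by apply.
  case=> [c|x] E /=; last by rewrite (sum_cone_inr y x n E).
  by rewrite HhM (inl_compE n (exist _ y (fun k => sum_cone_inl y c k E))).
move=> h' Hh' y; suff: forall e E, h' y = h0 y e E by apply.
case=> [c|x] E /=; case E1: (h' y) => [u|x1]; have := Hh' 0 y; rewrite E1 E //=.
  2: by move=> -[->].
(* In the [F]-summand, [h'] is a mediating map for the cone [inl_comp], so it is [hM]. *)
pose hM' (w : inl_part) : F L := if h' (proj1_sig w) is inl u then u else hM w.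
set yE := exist _ y (fun n => sum_cone_inl y c n E).
have <- : hM' yE = hM yE.
  apply: UhM => n w; rewrite /hM'; case E2: (h' (proj1_sig w)) => [u'|x'].
    by have := Hh' n (proj1_sig w); rewrite E2 inl_compE /= => -[].
  by have := Hh' 0 (proj1_sig w); rewrite E2 inl_compE.
by rewrite /hM' /= E1.
Qed.

End SumChainLimit.

Lemma sum_chain_limit {F : SetFunctor} {X : Type} {B : nat -> Type}
    {f : forall n, B n.+1 -> B n} {L : Type} {p : forall n, L -> B n} :
  is_chain_limit (A := fun n => F (B n)) (fun n => fmap F (f n)) (fun n => fmap F (p n)) ->
  is_chain_limit (A := fun n => (F (B n) + X)%type) (fun n => Gmap F (f n))
                 (fun n => Gmap F (p n)).
Proof.
move=> HL; split; first by move=> n [u|x] //=; congr inl; apply: (proj1 HL).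
by move=> Z z Hz; exact: (sum_cone_mediator HL Hz).
Qed.

Lemma finite_common_bound {k : nat} (P : 'I_k -> nat -> Prop) :
  (forall i n N, n <= N -> P i n -> P i N) -> (forall i, exists n, P i n) ->
  exists N, forall i, P i N.
Proof.
elim: k P => [|k IH] P Pmono Pex; first by exists 0 => -[].
have [N1 HN1] := IH (fun i n => P (lift ord0 i) n) (fun i => Pmono _) (fun i => Pex _).
have [N0 HN0] := Pex ord0.
exists (maxn N0 N1) => i; case: (unliftP ord0 i) => [j ->|->].
- by apply: (Pmono _ N1); [rewrite leq_maxr|].
- by apply: (Pmono _ N0); [rewrite leq_maxl|].
Qed.

Section Completion.
Context {F : SetFunctor} {Sigma : nat -> Type} {eps : forall Y : Type, HS Sigma Y -> F Y}.
Hypothesis Heps : is_presentation eps.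
Context {X : Type} (p' : Sigma 0 + X).
Context {PhiX : Type} {phi : F PhiX + X -> PhiX}.
Hypothesis Hphi : is_initial_algebra phi.
Context {PsiX : Type} {tau : PsiX -> F PsiX + X} {tau_inv : F PsiX + X -> PsiX}.
Hypothesis tau_invK : forall x, tau_inv (tau x) = x.
Context {m : PhiX -> PsiX}.
Hypothesis Hm : forall z, tau (m (phi z)) = Gmap F m z.

Lemma eps_nat (A B : Type) (f : A -> B) n s (ys : 'I_n -> A) :
  fmap F f (eps A (existT _ n (s, ys))) = eps B (existT _ n (s, fun i => f (ys i))).
Proof. by rewrite -(proj1 Heps). Qed.

Lemma tau_inj x y : tau x = tau y -> x = y.
Proof. by move=> E; rewrite -(tau_invK x) E tau_invK. Qed.

Definition base_point : PhiX := hX eps phi (pleaf p').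

Fixpoint trunc (n : nat) (y : PsiX) : PhiX :=
  if n is k.+1 then phi (Gmap F (trunc k) (tau y)) else base_point.

Lemma trunc_m_phi k z : trunc k.+1 (m (phi z)) = phi (Gmap F (fun a => trunc k (m a)) z).
Proof. by rewrite /= Hm Gmap_comp. Qed.

Lemma trunc_base k : trunc k (m base_point) = base_point.
Proof.
case: k => // k; rewrite /base_point; case: p' => [s|x].
- rewrite [pleaf _]/= [hX _ _ (FNode _ _)]/= trunc_m_phi /=; congr (phi (inl _)).
  rewrite eps_nat; congr (eps _ (existT _ 0 (s, _))).
  by apply: functional_extensionality => -[].
- by rewrite [pleaf _]/= [hX _ _ (FLeaf _)]/= trunc_m_phi.
Qed.

Lemma trunc_trunc k n y : trunc k (m (trunc n y)) = trunc (minn k n) y.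
Proof.
elim: k n y => [|k IH] n y; first by rewrite min0n.
case: n => [|n]; first by rewrite minn0 trunc_base.
rewrite [trunc n.+1 y]/= trunc_m_phi Gmap_comp minnSS /=.
by congr phi; apply: Gmap_ext => a; rewrite IH.
Qed.

Lemma trunc_idem n y : trunc n (m (trunc n y)) = trunc n y.
Proof. by rewrite trunc_trunc minnn. Qed.

Lemma trunc_fixed_mono n N a : n <= N -> trunc n (m a) = a -> trunc N (m a) = a.
Proof. by move=> le_nN E; rewrite -{1}E trunc_trunc (minn_idPr le_nN) E. Qed.

(* Every element of the initial algebra has finite depth: it is fixed by some
   truncation. This is where the finitary presentation is used. *)
Lemma trunc_finite a : exists n, trunc n (m a) = a.
Proof.
apply: (initial_algebra_ind (fun a => exists n, trunc n (m a) = a) Hphi).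
case=> [u|x]; last by exists 1; rewrite trunc_m_phi.
have [[k [s ys]] <-] := proj2 Heps _ u.
have [N HN] := finite_common_bound
  (fun i n => trunc n (m (proj1_sig (ys i))) = proj1_sig (ys i))
  (fun i n N le => trunc_fixed_mono n N _ le) (fun i => proj2_sig (ys i)).
exists N.+1; rewrite trunc_m_phi /= !eps_nat.
by congr (phi (inl (eps _ (existT _ k (s, _))))); apply: functional_extensionality => i; rewrite HN.
Qed.

Lemma m_inj : injective m.
Proof.
move=> a b E; have [n Hn] := trunc_finite a; have [k Hk] := trunc_finite b.
rewrite -(trunc_fixed_mono _ _ _ (leq_maxl n k) Hn) -(trunc_fixed_mono _ _ _ (leq_maxr n k) Hk).
by rewrite E.
Qed.

(* [PsiX] is the limit of the chain of truncations.  [Depth n] consists of the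
   elements of depth at most [n]; [Compatible] is the limit of the chain of
   restrictions [Depth n.+1 -> Depth n]. *)
Hypothesis Htau : is_terminal_coalgebra tau.
Hypothesis HFlim : preserves_omegaop_limits F.

Definition Depth n := {a : PhiX | trunc n (m a) = a}.

Definition to_depth n (y : PsiX) : Depth n :=
  exist _ (trunc n y) (trunc_idem n y).

Definition restrict n (a : Depth n.+1) : Depth n := to_depth n (m (proj1_sig a)).

Definition Compatible := {w : forall n, Depth n | forall n, restrict n (w n.+1) = w n}.

Definition mk_compatible (w : forall n, Depth n)
  (Hw : forall n, restrict n (w n.+1) = w n) : Compatible := exist _ w Hw.

Definition chain_proj n (w : Compatible) : Depth n := proj1_sig w n.

Lemma compatible_limit : is_chain_limit restrict chain_proj.
Proof.
split; first by move=> n [w Hw].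
move=> Z z Hz; exists (fun y => mk_compatible (fun n => z n y) (fun n => Hz n y)).
split=> // h' Hh' y; apply: sig_eq => /=.
by apply: functional_extensionality_dep => n; exact: Hh'.
Qed.

Lemma restrict_to_depth n y : restrict n (to_depth n.+1 y) = to_depth n y.
Proof.
apply: sig_eq; change (trunc n (m (trunc n.+1 y)) = trunc n y).
by rewrite trunc_trunc (minn_idPl (leqnSn n)).
Qed.

Definition to_compatible (y : PsiX) : Compatible :=
  mk_compatible (fun n => to_depth n y) (fun n => restrict_to_depth n y).

Definition unfold n (a : Depth n.+1) : F (Depth n) + X :=
  Gmap F (to_depth n) (tau (m (proj1_sig a))).

Lemma unfold_to_depth n y : unfold n (to_depth n.+1 y) = Gmap F (to_depth n) (tau y).
Proof.
rewrite /unfold /= Hm !Gmap_comp; apply: Gmap_ext => b.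
by apply: sig_eq; rewrite /= trunc_idem.
Qed.

Lemma unfold_restrict n (a : Depth n.+2) :
  Gmap F (restrict n) (unfold n.+1 a) = unfold n (restrict n.+1 a).
Proof.
rewrite /restrict unfold_to_depth /unfold Gmap_comp.
by apply: Gmap_ext => b; apply: restrict_to_depth.
Qed.

Lemma phi_unfold n (a : Depth n.+1) : phi (Gmap F (@proj1_sig _ _) (unfold n a)) = proj1_sig a.
Proof. by rewrite /unfold Gmap_comp -{2}(proj2_sig a). Qed.

(* The unfoldings make [Compatible] a coalgebra (as [F(-) + X] preserves the
   limit), whose coalgebra map [h] into [PsiX] has the prescribed truncations
   and is inverse to [to_compatible]. *)
Lemma compatible_coalgebra : exists h : Compatible -> PsiX,
  (forall n w, trunc n (h w) = proj1_sig (chain_proj n w)) /\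
  (forall y, h (to_compatible y) = y).
Proof.
have LG := sum_chain_limit (X := X) (HFlim _ _ _ _ compatible_limit).
have cone : forall n w, Gmap F (restrict n) (unfold n.+1 (chain_proj n.+2 w))
                        = unfold n (chain_proj n.+1 w).
  by move=> n [w Hw]; rewrite /chain_proj /= unfold_restrict Hw.
have [ell [Hell _]] := proj2 LG Compatible _ cone.
have [h [Hh _]] := Htau _ ell.
exists h; split.
  elim=> [|n IH] w; first by rewrite -(proj2_sig (chain_proj 0 w)).
  rewrite /= Hh Gmap_comp (Gmap_ext _ IH) -(Gmap_comp (chain_proj n)) Hell.
  exact: phi_unfold.
have cone2 : forall n y, Gmap F (restrict n) (Gmap F (to_depth n.+1) (tau y))
                         = Gmap F (to_depth n) (tau y).
  by move=> n y; rewrite Gmap_comp; apply: Gmap_ext => b; apply: restrict_to_depth.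
have [e [_ Ue]] := proj2 LG PsiX _ cone2.
have ell_to : forall y, ell (to_compatible y) = Gmap F to_compatible (tau y).
  move=> y; rewrite (Ue (fun y => ell (to_compatible y))); last first.
    by move=> n y'; rewrite Hell unfold_to_depth.
  by rewrite (Ue (fun y => Gmap F to_compatible (tau y))) // => n y'; rewrite Gmap_comp.
apply: (terminal_coalgebra_endo (fun y => h (to_compatible y)) Htau) => y.
by rewrite Hh ell_to Gmap_comp.
Qed.

Lemma trunc_separates x y : (forall n, trunc n x = trunc n y) -> x = y.
Proof.
move=> Exy; have [h [_ hK]] := compatible_coalgebra.
rewrite -(hK x) -(hK y); congr h; apply: sig_eq => /=.
by apply: functional_extensionality_dep => n; apply: sig_eq; rewrite /= Exy.
Qed.

Lemma trunc_complete (a : nat -> PhiX) :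
  (forall k n, trunc k (m (a n)) = a (minn k n)) -> exists y, forall n, trunc n y = a n.
Proof.
move=> Ha; have [h [htrunc _]] := compatible_coalgebra.
have depth_a : forall n, trunc n (m (a n)) = a n by move=> n; rewrite Ha minnn.
pose w n : Depth n := exist _ (a n) (depth_a n).
have Hw : forall n, restrict n (w n.+1) = w n.
  by move=> n; apply: sig_eq; rewrite /= Ha (minn_idPl (leqnSn n)).
by exists (h (mk_compatible w Hw)) => n; rewrite htrunc.
Qed.

Definition below (x y : PsiX) : Prop := x = y \/ exists n, x = m (trunc n y).

Section OrderByCutting.
Context {khat : tree Sigma X -> PsiX}.
Hypothesis Hkhat : forall t, tau (khat t) = Gmap F khat (tree_coalg eps t).

Lemma trunc_khat k s : trunc k (khat s) = hX eps phi (cut p' k s).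
Proof.
elim: k s => [|k IH] s //; rewrite [trunc _ _]/= Hkhat Gmap_comp; case: s => [x|n s ch] //=.
rewrite eps_nat; congr (phi (inl (eps _ (existT _ n (s, _))))).
by apply: functional_extensionality => i; exact: IH.
Qed.

Lemma khat_embed t : khat (embed t) = m (hX eps phi t).
Proof.
elim: t => [x|n s ch IH]; apply: tau_inj; rewrite /= Hkhat Hm //=.
rewrite !eps_nat; congr (inl (eps _ (existT _ n (s, _)))).
by apply: functional_extensionality => i; exact: IH.
Qed.

Lemma tree_frob (t : tree Sigma X) :
  t = match t with Leaf x => Leaf x | Node n s ch => Node s ch end.
Proof. by case: t. Qed.

(* Every element of [PsiX] is represented by a tree: unfold it corecursively,
   choosing at each node a preimage under the (surjective) presentation. *)
Lemma khat_surj y : exists s, khat s = y.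
Proof.
have repr : forall y, exists c : HS Sigma PsiX + X,
    match c with inl h => inl (eps _ h) | inr x => inr x end = tau y.
  move=> y0; case: (tau y0) => [u|x]; last by exists (inr x).
  by have [h Eh] := proj2 Heps _ u; exists (inl h); rewrite Eh.
pose pick y := proj1_sig (constructive_indefinite_description _ (repr y)).
have pickE : forall y, match pick y with inl h => inl (eps _ h) | inr x => inr x end = tau y.
  by move=> y0; rewrite /pick; case: (constructive_indefinite_description _ _).
pose unf := cofix unf (y : PsiX) : tree Sigma X :=
  match pick y with
  | inl (existT n (s, ys)) => Node s (fun i => unf (ys i))
  | inr x => Leaf x end.
exists (unf y); apply: (terminal_coalgebra_endo (fun y => khat (unf y)) Htau) => y0.
rewrite Hkhat -pickE [unf y0]tree_frob /=.
by case: (pick y0) => [[n [s ys]]|x] //=; rewrite !eps_nat.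
Qed.

Lemma cut_le_below : cut_le eps phi p' khat = below.
Proof.
apply: functional_extensionality => x; apply: functional_extensionality => y.
apply: propositional_extensionality; split.
- case=> [->|[s [s' [n [-> [-> Hs]]]]]]; first by left.
  right; exists n; apply: trunc_separates => k.
  by rewrite trunc_khat Hs -trunc_khat khat_embed trunc_khat.
- case=> [->|[n ->]]; first by left.
  right; have [s' <-] := khat_surj y.
  exists (embed (cut p' n s')), s', n; split; first by rewrite khat_embed trunc_khat.
  by split=> // k.
Qed.

End OrderByCutting.

Lemma below_refl x : below x x.
Proof. by left. Qed.

Lemma below_cut n y : below (m (trunc n y)) y.
Proof. by right; exists n. Qed.

Lemma below_cuts n k y : n <= k -> below (m (trunc n y)) (m (trunc k y)).
Proof. by move=> le_nk; right; exists n; rewrite trunc_trunc (minn_idPl le_nk). Qed.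

Lemma below_poset : is_poset below.
Proof.
split; first exact: below_refl.
split.
- move=> x y z [->|[n ->]] // [->|[k ->]]; first exact: below_cut.
  by right; exists (minn n k); rewrite trunc_trunc.
- move=> x y [//|[n Ex]] [->//|[k Ey]].
  have Hx : x = m (trunc (minn n k) x) by rewrite {1}Ex {1}Ey trunc_trunc.
  have Hy : y = m (trunc (minn k n) y) by rewrite {1}Ey {1}Ex trunc_trunc.
  case: (leqP n k) => nk.
    by rewrite (minn_idPr nk) in Hy; rewrite Ex -Hy.
  by rewrite (minn_idPr (ltnW nk)) in Hx; rewrite Ey -Hx.
Qed.

Lemma below_trans x y z : below x y -> below y z -> below x z.
Proof. exact: (proj1 (proj2 below_poset)). Qed.

Lemma trunc_agree_down n k z y : n <= k -> trunc k z = trunc k y -> trunc n z = trunc n y.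
Proof. by move=> le_nk E; rewrite -(minn_idPl le_nk) -trunc_trunc E trunc_trunc. Qed.

Lemma below_approx y u :
  (forall k, exists z, below z u /\ trunc k z = trunc k y) -> below y u.
Proof.
move=> approx; case: (classic (forall n, trunc n y = trunc n u)) => [E|].
  by left; apply: trunc_separates.
move=> /not_all_ex_not [n0 Hn0].
(* beyond depth [n0] an approximant must be a proper cut of [u], of height below [n0] *)
have proper_cut : forall k z, n0 <= k -> below z u -> trunc k z = trunc k y ->
    exists l, l < n0 /\ z = m (trunc l u) /\ trunc n0 y = trunc l u.
  move=> k z hk [->|[l ->]] Ez; first by case: Hn0; rewrite (trunc_agree_down _ _ _ _ hk Ez).
  have E2 := trunc_agree_down _ _ _ _ hk Ez; rewrite trunc_trunc in E2.
  case: (leqP n0 l) => nl; first by case: Hn0; rewrite -E2 (minn_idPl nl).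
  by exists l; split=> //; split=> //; rewrite -E2 (minn_idPr (ltnW nl)).
have [z0 [Hz0 E0]] := approx n0.
have [l [_ [_ El]]] := proper_cut n0 z0 (leqnn _) Hz0 E0.
right; exists l; apply: trunc_separates => k.
have [z [Hz Ez]] := approx (maxn k n0).
have [l' [_ [Ez' El']]] := proper_cut _ z (leq_maxr _ _) Hz Ez.
have -> : trunc k y = trunc k z.
  by apply: esym; apply: (trunc_agree_down _ _ _ _ (leq_maxl k n0)).
by rewrite Ez' -El' El.
Qed.

Lemma below_stable n x x' : m (trunc n x) <> x -> below x x' -> trunc n x' = trunc n x.
Proof.
move=> Hx [->|[j Ej]] //; case: (leqP j n) => jn.
  by case: Hx; rewrite {1}Ej trunc_trunc (minn_idPr jn) -Ej.
by rewrite Ej trunc_trunc (minn_idPl (ltnW jn)).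
Qed.

Lemma directed_stable D : directed below D -> forall n, exists x, D x /\
  forall x', D x' -> below x x' -> trunc n x' = trunc n x.
Proof.
move=> [[x0 Dx0] _] n.
case: (classic (exists x, D x /\ m (trunc n x) <> x)) => [[x [Dx Hx]]|H].
  by exists x; split=> // x' _; apply: below_stable.
have all_cuts : forall x, D x -> m (trunc n x) = x.
  by move=> x Dx; apply: NNPP => Hx; apply: H; exists x.
(* otherwise every element of [D] has depth at most [n], and by induction on
   [n] some element of [D] is maximal in [D] *)
suff [x [Dx Hx]] : exists x, D x /\ forall x', D x' -> below x x' -> x' = x.
  by exists x; split=> // x' Dx' lx; rewrite (Hx x' Dx' lx).
elim: n {H} all_cuts => [|k IH] all_cuts.
  exists x0; split=> // x' Dx' [->|[j Ej]] //.
  by rewrite Ej -(all_cuts x' Dx') /= trunc_base.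
case: (classic (exists x, D x /\ m (trunc k x) <> x)) => [[x [Dx Hx]]|H2]; last first.
  by apply: IH => x Dx; apply: NNPP => Hx; apply: H2; exists x.
exists x; split=> // x' Dx' [->|[j Ej]] //; case: (leqP j k) => jk.
  by case: Hx; rewrite {1}Ej trunc_trunc (minn_idPr jk) -Ej.
by rewrite Ej -(all_cuts x' Dx') trunc_trunc (minn_idPr jk).
Qed.

(* Directed joins exist, and each truncation of the join is attained in the set:
   the join is the element whose truncations are the stable ones. *)
Lemma below_directed_join D : directed below D ->
  exists j, is_join below D j /\ forall n, exists x, D x /\ trunc n x = trunc n j.
Proof.
move=> Dd; have common := proj2 Dd.
pose xs n := proj1_sig (constructive_indefinite_description _ (directed_stable D Dd n)).
have xsP : forall n, D (xs n) /\
    forall x', D x' -> below (xs n) x' -> trunc n x' = trunc n (xs n).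
  by move=> n; rewrite /xs; case: (constructive_indefinite_description _ _).
have [y Hy] : exists y, forall n, trunc n y = trunc n (xs n).
  apply: trunc_complete => k n; rewrite trunc_trunc.
  have [z [Dz [l1 l2]]] := common _ _ (proj1 (xsP n)) (proj1 (xsP (minn k n))).
  rewrite -(proj2 (xsP _) z Dz l2); apply: esym.
  exact: (trunc_agree_down _ _ _ _ (geq_minr k n) (proj2 (xsP n) z Dz l1)).
exists y; split; last by move=> n; exists (xs n); split; [exact: (proj1 (xsP n))|].
split=> [x Dx|u Hu]; last first.
  apply: below_approx => k; exists (xs k).
  by split; [apply: Hu; exact: (proj1 (xsP k)) | rewrite Hy].
(* an element of [D] of finite depth [h] is a cut of [y]; one of infinite
   depth has all its truncations stable, so it is [y] itself *)
case: (classic (exists h, m (trunc h x) = x)) => [[h Hh]|H].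
- have [z [Dz [l1 l2]]] := common _ _ Dx (proj1 (xsP h)).
  have E1 : trunc h z = trunc h y by rewrite Hy (proj2 (xsP h) z Dz l2).
  case: l1 => [Exz|[i Ei]]; first by right; exists h; rewrite -E1 -Exz Hh.
  right; exists (minn h i); rewrite -Hh {1}Ei trunc_trunc; congr m.
  exact: (trunc_agree_down _ _ _ _ (geq_minl h i) E1).
- left; apply: trunc_separates => n.
  have [z [Dz [l1 l2]]] := common _ _ Dx (proj1 (xsP n)).
  have Hn : m (trunc n x) <> x by move=> E; apply: H; exists n.
  by rewrite -(below_stable _ _ _ Hn l1) (proj2 (xsP n) z Dz l2) Hy.
Qed.

Lemma below_cpo : is_cpo below.
Proof.
split; first exact: below_poset.
by move=> D /below_directed_join [j [Hj _]]; exists j.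
Qed.

Definition cuts_from k0 y : PsiX -> Prop := fun z => exists n, z = m (trunc (n + k0) y).

Lemma cuts_directed k0 y : directed below (cuts_from k0 y).
Proof.
split; first by exists (m (trunc (0 + k0) y)), 0.
move=> _ _ [n ->] [k ->]; exists (m (trunc (maxn n k + k0) y)).
by split; [exists (maxn n k) | split; apply: below_cuts; rewrite leq_add2r ?leq_maxl ?leq_maxr].
Qed.

Lemma cuts_join k0 y : is_join below (cuts_from k0 y) y.
Proof.
split; first by move=> _ [n ->]; exact: below_cut.
move=> u Hu; apply: below_approx => k; exists (m (trunc (k + k0) y)).
by split; [apply: Hu; exists k | rewrite trunc_trunc (minn_idPl (leq_addr _ _))].
Qed.

Lemma m_preserves_joins (D : PhiX -> Prop) (j : PhiX) :
  directed (fun a b => below (m a) (m b)) D ->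
  is_join (fun a b => below (m a) (m b)) D j -> is_join below (img m D) (m j).
Proof.
move=> [[a0 Da0] Ddir] [Jub Jleast].
have dirM : directed below (img m D).
  split; first by exists (m a0), a0.
  move=> _ _ [a [Da ->]] [b [Db ->]]; have [c [Dc [ac bc]]] := Ddir a b Da Db.
  by exists (m c); split; [exists c|].
have [y0 [[Yub Yleast] _]] := below_directed_join _ dirM.
split; first by move=> _ [a [Da ->]]; apply: Jub.
move=> u Hu; apply: below_trans (Yleast u Hu).
(* the join [y0] lies below [m j], hence is itself in the image of [m] *)
have [a1 Ea1] : exists a1, y0 = m a1.
  have : below y0 (m j) by apply: Yleast => _ [a [Da ->]]; apply: Jub.
  by case=> [->|[n ->]]; [exists j | exists (trunc n (m j))].
by rewrite Ea1; apply: Jleast => a Da; rewrite -Ea1; apply: Yub; exists a.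
Qed.

(* A continuous map [f] from [PhiX] into a cpo extends to [PsiX] by sending [y]
   to the join of the images of its truncations. *)
Section ContinuousExtension.
Context {Q : Type} {leQ : Q -> Q -> Prop}.
Hypothesis HQ : is_cpo leQ.
Context {f : PhiX -> Q}.
Hypothesis Hf : continuous (fun a b => below (m a) (m b)) leQ f.

Lemma truncs_directed y : directed leQ (fun q => exists n, q = f (trunc n y)).
Proof.
split; first by exists (f (trunc 0 y)), 0.
move=> _ _ [n ->] [k ->]; exists (f (trunc (maxn n k) y)); split; first by exists (maxn n k).
by split; apply: (proj1 Hf); apply: below_cuts; rewrite ?leq_maxl ?leq_maxr.
Qed.

Definition extend (y : PsiX) : Q :=
  proj1_sig (constructive_indefinite_description _ (proj2 HQ _ (truncs_directed y))).

Lemma extendP y : is_join leQ (fun q => exists n, q = f (trunc n y)) (extend y).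
Proof. by rewrite /extend; case: (constructive_indefinite_description _ _). Qed.

Lemma extend_m a : extend (m a) = f a.
Proof.
apply: (join_uniq (proj1 HQ) (extendP (m a))); split.
  by move=> _ [n ->]; apply: (proj1 Hf); exact: below_cut.
by move=> u Hu; have [N HN] := trunc_finite a; rewrite -{1}HN; apply: Hu; exists N.
Qed.

Lemma extend_mono x y : below x y -> leQ (extend x) (extend y).
Proof.
case=> [->|[n ->]]; first exact: (proj1 (proj1 HQ)).
by rewrite extend_m; apply: (proj1 (extendP y)); exists n.
Qed.

Lemma extend_continuous : continuous below leQ extend.
Proof.
split=> [|D j Dd Dj]; first exact: extend_mono.
have [j' [Dj' approx]] := below_directed_join _ Dd.
rewrite (join_uniq below_poset Dj Dj').
split; first by move=> _ [x [Dx ->]]; apply: extend_mono; apply: (proj1 Dj').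
move=> u Hu; apply: (proj2 (extendP j')) => _ [n ->].
have [x [Dx Ex]] := approx n.
apply: (proj1 (proj2 (proj1 HQ)) _ (extend x)); last by apply: Hu; exists x.
by apply: (proj1 (extendP x)); exists n; rewrite Ex.
Qed.

End ContinuousExtension.

(* Continuous maps out of [PsiX] are determined by their values on cuts,
   since every element is the directed join of its cuts. *)
Lemma continuous_eq_on_cuts (Q : Type) (leQ : Q -> Q -> Prop) (g1 g2 : PsiX -> Q) :
  is_poset leQ -> continuous below leQ g1 -> continuous below leQ g2 ->
  (forall n y, g1 (m (trunc n.+1 y)) = g2 (m (trunc n.+1 y))) -> forall y, g1 y = g2 y.
Proof.
move=> HQ [_ g1_join] [_ g2_join] E y.
apply: (join_uniq HQ (g1_join _ _ (cuts_directed 1 y) (cuts_join 1 y))).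
apply: join_ext (g2_join _ _ (cuts_directed 1 y) (cuts_join 1 y)) => q.
by split=> -[_ [[n ->] ->]]; exists (m (trunc (n + 1) y));
  (split; [exists n | rewrite addn1 E]).
Qed.

Lemma m_conservative_completion :
  conservative_completion (fun a b => below (m a) (m b)) below m.
Proof.
split; first exact: below_cpo.
split; first exact: m_inj.
split; first by [].
split; first exact: m_preserves_joins.
move=> Q leQ HQ f Hf; exists (extend HQ Hf).
split; first exact: extend_continuous.
split; first exact: extend_m.
move=> g' Hg' g'_m; apply: (continuous_eq_on_cuts _ _ _ _ (proj1 HQ) Hg' (extend_continuous HQ Hf)).
by move=> n y; rewrite g'_m extend_m.
Qed.

Lemma tau_inv_continuous :
  continuous (fun z z' => below (tau_inv z) (tau_inv z')) below tau_inv.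
Proof. exact: continuous_pullback_inverse tau_invK. Qed.

Lemma tau_inv_extends z : tau_inv (Gmap F m z) = m (phi z).
Proof. by rewrite -Hm tau_invK. Qed.

Hypothesis tauK : forall z, tau (tau_inv z) = z.

Lemma tau_inv_unique (g : F PsiX + X -> PsiX) :
  continuous (fun z z' => below (tau_inv z) (tau_inv z')) below g ->
  (forall z, g (Gmap F m z) = m (phi z)) -> forall w, g w = tau_inv w.
Proof.
move=> g_cont g_ext w.
suff g_tau : forall y, g (tau y) = y by rewrite -{1}(tauK w) g_tau.
apply: (continuous_eq_on_cuts _ _ (fun y => g (tau y)) (fun y => y) below_poset
          (continuous_precomp_iso tau_invK g g_cont) (continuous_id below)).
by move=> n y; rewrite /= Hm g_ext.
Qed.

End Completion.

Theorem corollary5p12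
  (F : SetFunctor) (HF : bicontinuous F)
  (Sigma : nat -> Type) (eps : forall Y : Type, HS Sigma Y -> F Y)
  (Heps : is_presentation eps)
  (X : Type) (HX : inhabited X) (p' : Sigma 0 + X)
  (PhiX : Type) (phi : F PhiX + X -> PhiX) (Hphi : is_initial_algebra phi)
  (PsiX : Type) (tau : PsiX -> F PsiX + X) (Htau : is_terminal_coalgebra tau)
  (tau_inv : F PsiX + X -> PsiX)
  (Htau_inv1 : forall x, tau_inv (tau x) = x) (Htau_inv2 : forall z, tau (tau_inv z) = z)
  (m : PhiX -> PsiX) (Hm : forall z, tau (m (phi z)) = Gmap F m z)
  (khat : tree Sigma X -> PsiX)
  (Hkhat : forall t, tau (khat t) = Gmap F khat (tree_coalg eps t)) :
  let lePsi := cut_le eps phi p' khat in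
  let lePhi := fun a b => lePsi (m a) (m b) in
  let leFPsi := fun z z' => lePsi (tau_inv z) (tau_inv z') in
  is_cpo lePsi /\
  conservative_completion lePhi lePsi m /\
  (continuous leFPsi lePsi tau_inv /\
   (forall z, tau_inv (Gmap F m z) = m (phi z)) /\
   (forall g : F PsiX + X -> PsiX, continuous leFPsi lePsi g ->
      (forall z, g (Gmap F m z) = m (phi z)) -> forall w, g w = tau_inv w)).
Proof.
move=> lePsi lePhi leFPsi; have HFlim := proj2 HF.
rewrite /lePhi /leFPsi /lePsi (cut_le_below Heps p' Htau_inv1 Hm Htau HFlim Hkhat).
split; first exact: (below_cpo Heps p' Hm Htau HFlim).
split; first exact: (m_conservative_completion Heps p' Hphi Hm Htau HFlim).
split; first exact: (tau_inv_continuous p' Htau_inv1).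
split; first exact: (tau_inv_extends Htau_inv1 Hm).
exact: (tau_inv_unique Heps p' Htau_inv1 Hm Htau HFlim Htau_inv2).
Qed.
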